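(* Fix weights $w_1,\dots,w_n>0$ and boosts $b_1,\dots,b_n\in\mathbb{R}$, and let $\psi_i(c_i',p_i)=b_i+w_iv_i(c_i',p_i)$. Consider the Affine Maximizer Auction (AMA): given reports $(\mathbf{c}',\mathbf{p})$, the slot is allocated so as to maximize $\sum_{i\in N}\psi_i(c_i',p_i)\pi_i(\mathbf{c}',\mathbf{p})$ (i.e. to an advertiser with maximal $\psi_i(c_i',p_i)$, ties broken arbitrarily); losers pay $0$; the winner $i$ pays $v_i\big(\psi_i^{-1}(\psi^{(2)}(\mathbf{c}',\mathbf{p}),p_i),p_i\big)$, where $\psi_i^{-1}(\cdot,p_i)$ is the inverse of $c\mapsto\psi_i(c,p_i)$ and $\psi^{(2)}(\mathbf{c}',\mathbf{p})$ is the second highest of $\psi_j(c_j',p_j)$, $j\in N$. Then the AMA is incentive compatible and individually rational, and for each $i$ the price $\tilde{p}_i(c_i)\in\arg\max_{p'}v_i(c_i,p')$ is a dominant-strategy display price: for every $i$, every true cost $c_i$, every reports $(\mathbf{c}'_{-i},\mathbf{p}_{-i})$ of the others and every $p_i'$, the utility of $i$ under report $(c_i,\tilde{p}_i(c_i))$ is at least her utility under report $(c_i,p_i')$.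
   Context: There are advertisers $N=\{1,\dots,n\}$ competing for a single ad slot. Advertiser $i$ has a private product cost $c_i\in[\underline{c}_i,\overline{c}_i]$, sets a display price $p_i$, has conversion-rate function $\lambda_i:\mathbb{R}\to(0,1]$ and value $v_i(c_i,p_i)=(p_i-c_i)\lambda_i(p_i)$. An auction mechanism maps cost reports and display prices $(\mathbf{c}',\mathbf{p})$ to allocations $\pi_i(\mathbf{c}',\mathbf{p})\in\{0,1\}$ (at most one winner) and payments $x_i(\mathbf{c}',\mathbf{p})$; the utility of advertiser $i$ with true cost $c_i$ is $u_i=v_i(c_i,p_i)\pi_i(\mathbf{c}',\mathbf{p})-x_i(\mathbf{c}',\mathbf{p})$. IC: for all $i,c_i,\mathbf{p},\mathbf{c}'$, $u_i$ under report $(c_i,\mathbf{c}'_{-i})$ is at least $u_i$ under $(c_i',\mathbf{c}'_{-i})$. IR: $u_i\ge0$ under truthful cost report for all $i,c_i,\mathbf{p},\mathbf{c}'_{-i}$. *)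

From mathcomp Require Import all_boot all_order all_algebra.
Set Implicit Arguments. Unset Strict Implicit. Unset Printing Implicit Defensive.
Import Order.TTheory GRing.Theory Num.Theory.
Local Open Scope ring_scope.

Section AMA.
Variables (R : realFieldType) (n : nat).
(* lam i : conversion-rate function of advertiser i *)
Variable lam : 'I_n -> R -> R.
Variables (w b : 'I_n -> R).

Definition adval (i : 'I_n) (c p : R) : R := (p - c) * lam i p.

Definition psi (i : 'I_n) (c p : R) : R := b i + w i * adval i c p.

(* the inverse of c |-> psi_i(c,p) (an affine bijection when w_i > 0 and
   lambda_i(p) > 0): psi_i (psi_inv i y p) p = y *)
Definition psi_inv (i : 'I_n) (y p : R) : R := p - (y - b i) / (w i * lam i p).

(* second highest of the values psi_j(c'_j,p_j), j in N (as a multiset) *)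
Definition psi2 (cs ps : 'I_n -> R) : R :=
  nth 0 (sort (fun x y : R => y <= x) [seq psi j (cs j) (ps j) | j <- enum 'I_n]) 1.

(* A tie-breaking rule [sel] chooses the winner for each report profile;
   it is admissible for the AMA if it always picks an advertiser with
   maximal psi. *)
Definition ama_winner (sel : ('I_n -> R) -> ('I_n -> R) -> 'I_n) : Prop :=
  forall (cs ps : 'I_n -> R) (j : 'I_n),
    psi j (cs j) (ps j) <= psi (sel cs ps) (cs (sel cs ps)) (ps (sel cs ps)).

Definition alloc sel (cs ps : 'I_n -> R) (i : 'I_n) : R :=
  if sel cs ps == i then 1 else 0.

Definition pay sel (cs ps : 'I_n -> R) (i : 'I_n) : R :=
  if sel cs ps == i then adval i (psi_inv i (psi2 cs ps) (ps i)) (ps i) else 0.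

Definition util sel (i : 'I_n) (ci : R) (cs ps : 'I_n -> R) : R :=
  adval i ci (ps i) * alloc sel cs ps i - pay sel cs ps i.

End AMA.

Definition upd (R : Type) (n : nat) (f : 'I_n -> R) (i : 'I_n) (x : R) : 'I_n -> R :=
  fun j => if j == i then x else f j.

(** The AMA is a second-price auction on the affine scores psi_j.  Fix
    advertiser i and let m be the highest score among the others; m does not
    depend on i's report.  If i wins, psi^(2) = m and i's utility is the
    surplus v_i(c_i, p_i) - (m - b_i) / w_i; if i loses, it is 0.  Under a
    truthful cost report i wins exactly when the surplus is nonnegative, so
    her utility is max(0, surplus), which bounds her utility under any other
    report.  This gives IC and IR, and since the surplus increases with
    v_i(c_i, p_i), a maximizer of p |-> v_i(c_i, p) is a dominant display
    price. *)

From mathcomp Require Import all_boot all_order all_algebra.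
From mathcomp Require Import ring.
Import Order.TTheory GRing.Theory Num.Theory.
Local Open Scope ring_scope.
Set Implicit Arguments. Unset Strict Implicit.

Lemma upd_eq (T : Type) (n : nat) (f : 'I_n -> T) i x : upd f i x i = x.
Proof. by rewrite /upd eqxx. Qed.

Lemma upd_neq (T : Type) (n : nat) (f : 'I_n -> T) i x j :
  j != i -> upd f i x j = f j.
Proof. by move=> /negbTE ji; rewrite /upd ji. Qed.

Lemma ord_exists_neq (n : nat) (i : 'I_n) : (1 < n)%N -> exists j : 'I_n, j != i.
Proof.
move=> n_gt1; pose j0 : 'I_n := Ordinal (ltn_trans (ltnSn 0) n_gt1).
case: (eqVneq i j0) => [->|]; last by exists j0; rewrite eq_sym.
by exists (Ordinal n_gt1); rewrite -val_eqE.
Qed.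

Section MaxExcept.
Variables (R : realDomainType) (T : finType).

Definition max_except (g : T -> R) (i : T) (m : R) :=
  (forall j, j != i -> g j <= m) /\ exists2 j, j != i & g j = m.

Lemma exists_max_except (g : T -> R) (i j0 : T) :
  j0 != i -> exists m, max_except g i m.
Proof.
move=> j0i; case: (@arg_maxP _ _ T j0 (fun j => j != i) g j0i) => k ki k_max.
by exists (g k); split=> [j /k_max|]; last exists k.
Qed.

Lemma eq_max_except (g g' : T -> R) (i : T) (m : R) :
  (forall j, j != i -> g j = g' j) -> max_except g i m -> max_except g' i m.
Proof.
move=> gg' [le_m [k ki gk]]; split=> [j ji|]; first by rewrite -gg' // le_m.
by exists k; rewrite // -gg'.
Qed.

Lemma nth1_sort_ge (g : T -> R) (i : T) (m : R) :
  (forall j, g j <= g i) -> max_except g i m ->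
  nth 0 (sort (fun x y : R => y <= x) (map g (enum T))) 1 = m.
Proof.
move=> gi_max [le_m [k ki gk]]; subst m.
set ge := fun x y : R => y <= x.
have ge_trans : transitive ge by move=> x y z yx zy; exact: le_trans zy yx.
have ge_total : total ge by move=> x y; rewrite /ge le_total.
have ge_anti : antisymmetric ge by move=> x y; rewrite /ge andbC; exact: le_anti.
have i_enum : i \in enum T by rewrite mem_enum.
have k_rem : k \in rem i (enum T) by rewrite mem_rem_uniq ?enum_uniq // inE ki mem_enum.
set rest := map g (rem k (rem i (enum T))).
have rest_le : forall x, x \in rest -> x <= g k.
  move=> x /mapP[j /mem_rem j_rem ->]; apply: le_m.
  by move: j_rem; rewrite mem_rem_uniq ?enum_uniq // inE => /andP[].
have -> : sort ge (map g (enum T)) = g i :: g k :: sort ge rest.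
  apply: (sorted_eq ge_trans ge_anti); first exact: sort_sorted.
    rewrite /= {1}/ge gi_max /=.
    case E: (sort ge rest) => [|x s] //=.
    have := sort_sorted ge_total rest; rewrite E /= => ->; rewrite andbT.
    by apply: rest_le; rewrite -(mem_sort ge) E mem_head.
  rewrite perm_sort; apply: perm_trans (perm_map g (perm_to_rem i_enum)) _.
  rewrite /= perm_cons; apply: perm_trans (perm_map g (perm_to_rem k_rem)) _.
  by rewrite /= perm_cons perm_sym perm_sort.
by [].
Qed.

End MaxExcept.

Section AffineMaximizer.
Variables (R : realFieldType) (n : nat).
Variables (lam : 'I_n -> R -> R) (w b : 'I_n -> R).
Hypotheses (lam_gt0 : forall i p, 0 < lam i p) (w_gt0 : forall i, 0 < w i).
Variable sel : ('I_n -> R) -> ('I_n -> R) -> 'I_n.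
Hypothesis sel_max : ama_winner lam w b sel.

Definition score (cs ps : 'I_n -> R) (j : 'I_n) := psi lam w b j (cs j) (ps j).

Definition surplus (i : 'I_n) (c p m : R) := adval lam i c p - (m - b i) / w i.

Lemma surplus_ge0 i c p m : (0 <= surplus i c p m) = (m <= psi lam w b i c p).
Proof. by rewrite /surplus /psi subr_ge0 ler_pdivrMr // lerBlDl mulrC. Qed.

Lemma surplus_le0 i c p m : (surplus i c p m <= 0) = (psi lam w b i c p <= m).
Proof. by rewrite /surplus /psi subr_le0 ler_pdivlMr // lerBrDl mulrC. Qed.

Lemma psi2_winner cs ps m :
  max_except (score cs ps) (sel cs ps) m -> psi2 lam w b cs ps = m.
Proof. exact/nth1_sort_ge/sel_max. Qed.

Lemma util_winner i c cs ps :
  sel cs ps = i -> util lam w b sel i c cs ps = surplus i c (ps i) (psi2 lam w b cs ps).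
Proof.
move=> win; rewrite /util /alloc /pay win eqxx mulr1; congr (_ - _).
have /gt_eqF w_neq0 := w_gt0 i; have /gt_eqF lam_neq0 := lam_gt0 i (ps i).
by rewrite /adval /psi_inv; field; rewrite w_neq0 lam_neq0.
Qed.

Lemma util_loser i c cs ps : sel cs ps != i -> util lam w b sel i c cs ps = 0.
Proof. by move=> /negbTE lose; rewrite /util /alloc /pay lose mulr0 subr0. Qed.

Lemma util_le_max0_surplus i c cs ps m :
  max_except (score cs ps) i m ->
  util lam w b sel i c cs ps <= Num.max 0 (surplus i c (ps i) m).
Proof.
move=> rival; have [win|lose] := eqVneq (sel cs ps) i.
  by rewrite util_winner // (@psi2_winner cs ps m) ?win // le_max lexx orbT.
by rewrite util_loser // le_max lexx.
Qed.

Lemma util_truthful i c cs ps m :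
  cs i = c -> max_except (score cs ps) i m ->
  util lam w b sel i c cs ps = Num.max 0 (surplus i c (ps i) m).
Proof.
move=> <- rival; have [win|lose] := eqVneq (sel cs ps) i.
  rewrite util_winner // (@psi2_winner cs ps m) ?win //; apply/esym/max_idPr.
  case: rival => _ [k _ <-]; rewrite surplus_ge0 -win; exact: sel_max.
rewrite util_loser //; apply/esym/max_idPl; rewrite surplus_le0.
case: rival => le_m _; exact: le_trans (sel_max cs ps i) (le_m _ lose).
Qed.

Hypothesis n_gt1 : (1 < n)%N.

Lemma exists_rival_max cs ps i : exists m, max_except (score cs ps) i m.
Proof. by have [j ji] := ord_exists_neq i n_gt1; exact: exists_max_except ji. Qed.

Lemma ama_incentive_compatible i c c' cs ps :
  util lam w b sel i c (upd cs i c') ps <= util lam w b sel i c (upd cs i c) ps.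
Proof.
have [m rival] := exists_rival_max (upd cs i c) ps i.
rewrite (util_truthful (upd_eq _ _ _) rival); apply: util_le_max0_surplus.
by apply: eq_max_except rival => j ji; rewrite /score !upd_neq.
Qed.

Lemma ama_individually_rational i c cs ps :
  0 <= util lam w b sel i c (upd cs i c) ps.
Proof.
have [m rival] := exists_rival_max (upd cs i c) ps i.
by rewrite (util_truthful (upd_eq _ _ _) rival) le_max lexx.
Qed.

Lemma ama_dominant_price i c cs ps pt p' :
  (forall q, adval lam i c q <= adval lam i c pt) ->
  util lam w b sel i c (upd cs i c) (upd ps i p')
    <= util lam w b sel i c (upd cs i c) (upd ps i pt).
Proof.
move=> pt_max; have [m rival] := exists_rival_max cs ps i.
have rival_upd p : max_except (score (upd cs i c) (upd ps i p)) i m.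
  by apply: eq_max_except rival => j ji; rewrite /score !upd_neq.
rewrite (util_truthful (upd_eq _ _ _) (rival_upd pt)).
apply: le_trans (util_le_max0_surplus c (rival_upd p')) _.
by rewrite !upd_eq le_max2 // lerD2r.
Qed.

End AffineMaximizer.

Theorem proposition3 (R : realFieldType) (n : nat) (hn : (1 < n)%N)
  (clo chi : 'I_n -> R) (hlohi : forall i, clo i <= chi i)
  (lam : 'I_n -> R -> R) (hlam : forall i p, 0 < lam i p <= 1)
  (w b : 'I_n -> R) (hw : forall i, 0 < w i)
  (sel : ('I_n -> R) -> ('I_n -> R) -> 'I_n)
  (hsel : ama_winner lam w b sel) :
  (* incentive compatibility *)
  (forall (i : 'I_n) (ci : R) (ps cs : 'I_n -> R) (ci' : R),
     clo i <= ci <= chi i -> clo i <= ci' <= chi i ->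
     (forall j, clo j <= cs j <= chi j) ->
     util lam w b sel i ci (upd cs i ci') ps <= util lam w b sel i ci (upd cs i ci) ps)
  /\
  (* individual rationality *)
  (forall (i : 'I_n) (ci : R) (ps cs : 'I_n -> R),
     clo i <= ci <= chi i ->
     (forall j, clo j <= cs j <= chi j) ->
     0 <= util lam w b sel i ci (upd cs i ci) ps)
  /\
  (* any maximizer of p' |-> v_i(c_i, p') is a dominant-strategy display price *)
  (forall (i : 'I_n) (ci : R) (ps cs : 'I_n -> R) (pt p' : R),
     clo i <= ci <= chi i ->
     (forall j, clo j <= cs j <= chi j) ->
     (forall q, adval lam i ci q <= adval lam i ci pt) ->
     util lam w b sel i ci (upd cs i ci) (upd ps i p')
       <= util lam w b sel i ci (upd cs i ci) (upd ps i pt)).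
Proof.
have lam_gt0 i p : 0 < lam i p by case/andP: (hlam i p).
split; [|split].
- by move=> i ci ps cs ci' _ _ _; exact: ama_incentive_compatible.
- by move=> i ci ps cs _ _; exact: ama_individually_rational.
- by move=> i ci ps cs pt p' _ _; exact: ama_dominant_price.
Qed.
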